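(* Let $f:\mathbb{R}^d\to\mathbb{R}$ be Lipschitz continuous and SISTr, and let $\ell\in\mathbb{R}$. Then for each $x\in\mathbb{R}^d$ there is a unique $c_x\in\mathbb{R}$ with $f(x+c_x\mathbf{1})=\ell$, and the map $x\mapsto c_x$ is continuous.
   Context: $\mathbf{1}$ is the all-ones vector in $\mathbb{R}^d$. A function $g:\mathbb{R}^d\to\mathbb{R}$ is SISTr (strictly increasing under scalar translation) if, for every $x\in\mathbb{R}^d$, the map $c\in\mathbb{R}\mapsto g(x+c\mathbf{1})$ is strictly increasing and maps $\mathbb{R}$ onto $\mathbb{R}$. *)

From HB Require Import structures.
From mathcomp Require Import all_boot all_order all_algebra.
From mathcomp Require Import all_classical all_reals all_analysis.
Set Implicit Arguments. Unset Strict Implicit. Unset Printing Implicit Defensive.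
Import Order.TTheory GRing.Theory Num.Theory.
Import numFieldNormedType.Exports.
Local Open Scope ring_scope.

(* R^d is represented as row vectors 'rV[R]_d (normed with the sup norm;
   Lipschitz continuity does not depend on the choice of norm on R^d). *)

Definition ones (R : realType) (d : nat) : 'rV[R]_d := const_mx 1.

Definition SISTr (R : realType) (d : nat) (g : 'rV[R]_d -> R) : Prop :=
  forall x : 'rV[R]_d,
    (forall c1 c2 : R, c1 < c2 -> g (x + c1 *: ones R d) < g (x + c2 *: ones R d))
    /\ (forall y : R, exists c : R, g (x + c *: ones R d) = y).

(* Lipschitz continuity: we use MathComp-Analysis's notation [lipschitz f]
   (normedtype: lipschitz_on f (globally setT)), i.e. exists k, |f x - f y| <= k ||x - y||. *)

From HB Require Import structures.
From mathcomp Require Import all_boot all_order all_algebra.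
From mathcomp Require Import all_classical all_reals all_analysis.
Import Order.TTheory GRing.Theory Num.Theory.
Import numFieldNormedType.Exports.
Local Open Scope ring_scope.
Local Open Scope classical_set_scope.

(* Along each diagonal line x + R 1 the function f is an increasing bijection
   onto R, so the level l is crossed exactly once, at c_x.  If c_x is moved by e,
   f takes values strictly below and above l at x + (c_x -+ e) 1; by continuity of
   f these strict inequalities persist at t + (c_x -+ e) 1 for t near x, which
   traps c_t in (c_x - e, c_x + e).  Lipschitz continuity is only used through
   continuity. *)

Lemma lipschitz_continuous (R : realFieldType) (V W : normedModType R)
    (f : V -> W) :
  lipschitz f -> continuous f.
Proof.
move=> /pinfty_ex_gt0[k k_gt0 fk] x; apply/cvgrPdist_lt => e e_gt0.
apply/nbhs_normP; exists (e / k) => [|t /= xt]; first exact: divr_gt0.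
have := fk (x, t) (conj I I); rewrite /= => /le_lt_trans; apply.
by rewrite mulrC -ltr_pdivlMr.
Qed.

Section LevelShift.
Variables (R : realType) (d : nat) (f : 'rV[R]_d -> R).

Definition level_shift (l : R) (x : 'rV[R]_d) : R :=
  xget 0 [set c | f (x + c *: ones R d) = l].

Hypothesis fS : SISTr f.

Lemma SISTr_ler_mono x : {mono (fun c => f (x + c *: ones R d)) : a b / a <= b}.
Proof. exact/le_mono/(fS x).1. Qed.

Lemma SISTr_ltr_mono x : {mono (fun c => f (x + c *: ones R d)) : a b / a < b}.
Proof. exact/leW_mono/SISTr_ler_mono. Qed.

Lemma level_shiftP l x : f (x + level_shift l x *: ones R d) = l.
Proof. exact: (xgetPex 0 ((fS x).2 l)). Qed.

Lemma level_shift_unique l x c :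
  f (x + c *: ones R d) = l -> c = level_shift l x.
Proof.
by move=> fc; apply: (inc_inj (SISTr_ler_mono x)); rewrite /= level_shiftP.
Qed.

Lemma lt_level_shift l x c : f (x + c *: ones R d) < l -> c < level_shift l x.
Proof. by rewrite -{1}(level_shiftP l x) SISTr_ltr_mono. Qed.

Lemma level_shift_lt l x c : l < f (x + c *: ones R d) -> level_shift l x < c.
Proof. by rewrite -{1}(level_shiftP l x) SISTr_ltr_mono. Qed.

Lemma level_shift_continuous l : continuous f -> continuous (level_shift l).
Proof.
move=> fC x; apply/(@cvgrPdist_lt _ _ _ (nbhs x) (nbhs_filter x)) => e e_gt0.
have along b : {for x, continuous (f \o +%R^~ (b *: ones R d))}.
  apply: continuous_comp (fC _).
  exact: (@cvgD _ _ _ _ (nbhs_filter x)) cvg_id (cvg_cst _).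
have below : f (x + (level_shift l x - e) *: ones R d) < l.
  by rewrite -{2}(level_shiftP l x) SISTr_ltr_mono gtrBl.
have above : l < f (x + (level_shift l x + e) *: ones R d).
  by rewrite -{1}(level_shiftP l x) SISTr_ltr_mono ltrDl.
near=> t; rewrite ltr_distlC; apply/andP; split.
- by apply: lt_level_shift; near: t; exact: cvgr_lt (along _) _ below.
- by apply: level_shift_lt; near: t; exact: cvgr_gt (along _) _ above.
Unshelve. all: by end_near.
Qed.

End LevelShift.

Arguments level_shift {R d} f l x.

Theorem lemma3p2 (R : realType) (d : nat) (f : 'rV[R]_d -> R) (l : R) :
  lipschitz f -> SISTr f ->
  exists c : 'rV[R]_d -> R,
    (forall x : 'rV[R]_d,
        f (x + c x *: ones R d) = l /\
        (forall c' : R, f (x + c' *: ones R d) = l -> c' = c x))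
    /\ continuous c.
Proof.
move=> /lipschitz_continuous fC fS; exists (level_shift f l); split=> [x|].
  by split=> [|c]; [exact: level_shiftP | exact: level_shift_unique].
exact: level_shift_continuous.
Qed.
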